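(* Let $\psi_n$ be the division polynomials of the Legendre curve defined below. For every $\varepsilon>0$ there exists a constant $c(\varepsilon)$ such that for all $n\ge 1$, $h(\psi_n)\le c(\varepsilon)\, n^{2+\varepsilon}$; that is, $h(\psi_n)\le n^{2+o(1)}$.
   Context: Let $\lambda, X, Y$ be independent variables (associated with the Legendre curve $E_\lambda: Y^2=X(X-1)(X-\lambda)$). Define $\psi_n \in \mathbb{Z}[\lambda,X,Y]$ by $\psi_0=0$, $\psi_1=1$, $\psi_2=2Y$, $\psi_3 = 3X^4-4(1+\lambda)X^3+6\lambda X^2-\lambda^2$, $\psi_4 = 2Y\big(2X^6-4(1+\lambda)X^5+10\lambda X^4-10\lambda^2X^2+4\lambda^2(1+\lambda)X-2\lambda^3\big)$, and recursively $$\psi_{2k+1}=\psi_{k+2}\psi_k^3-\psi_{k-1}\psi_{k+1}^3,\qquad \psi_{2k}=\frac{1}{2Y}\psi_k\big(\psi_{k+2}\psi_{k-1}^2-\psi_{k-2}\psi_{k+1}^2\big).$$ For a polynomial $G$ with integer coefficients, its height $h(G)$ is the logarithm of the maximum of the absolute values of its coefficients. *)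

From HB Require Import structures.
From Stdlib Require Import Reals.
From mathcomp Require Import all_boot all_algebra.
From mathcomp Require Import mpoly.
Set Implicit Arguments. Unset Strict Implicit. Unset Printing Implicit Defensive.
Import GRing.Theory.
Local Open Scope ring_scope.

(* Z[lambda, X, Y] : variables 0 = lambda, 1 = X, 2 = Y *)
Notation ZLXY := {mpoly int[3]}.
Definition iL : 'I_3 := @Ordinal 3 0 isT.
Definition iX : 'I_3 := @Ordinal 3 1 isT.
Definition iY : 'I_3 := @Ordinal 3 2 isT.
Definition vL : ZLXY := 'X_iL.
Definition vX : ZLXY := 'X_iX.
Definition vY : ZLXY := 'X_iY.

(* Division by 2Y: maps sum_m c_m X^m to sum_{m_Y >= 1} (c_m div 2) X^(m - e_Y).
   When p is divisible by 2Y in Z[lambda,X,Y] (as it is in the recursion below),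
   this is exactly the quotient p / (2Y). *)
Definition div2Y (p : ZLXY) : ZLXY :=
  \sum_(m <- msupp p | leq 1 (m iY))
     ((p@_m %/ 2)%Z) *: 'X_[mnm_sub m U_(iY)].

Definition psi3 : ZLXY :=
  3%:R * vX ^+ 4 - 4%:R * (1 + vL) * vX ^+ 3 + 6%:R * vL * vX ^+ 2 - vL ^+ 2.

Definition psi4 : ZLXY :=
  2%:R * vY * (2%:R * vX ^+ 6 - 4%:R * (1 + vL) * vX ^+ 5 + 10%:R * vL * vX ^+ 4
     - 10%:R * vL ^+ 2 * vX ^+ 2 + 4%:R * vL ^+ 2 * (1 + vL) * vX
     - 2%:R * vL ^+ 3).

Definition psi_next (s : seq ZLXY) : ZLXY :=
  let m := size s in
  let P i := nth 0 s i in
  match m with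
  | 0 => 0
  | 1 => 1
  | 2 => 2%:R * vY
  | 3 => psi3
  | 4 => psi4
  | _ => if odd m then
           let k := m./2 in
           P k.+2 * P k ^+ 3 - P k.-1 * P k.+1 ^+ 3
         else
           let k := m./2 in
           div2Y (P k * (P k.+2 * P k.-1 ^+ 2 - P k.-2 * P k.+1 ^+ 2))
  end.

Fixpoint psi_list (n : nat) : seq ZLXY :=
  match n with
  | 0 => [::]
  | n'.+1 => let s := psi_list n' in rcons s (psi_next s)
  end.

Definition psi (n : nat) : ZLXY := nth 0 (psi_list n.+1) n.

Definition maxcoef (G : ZLXY) : nat := \max_(m <- msupp G) `|G@_m|%N.

Definition height (G : ZLXY) : Rdefinitions.R := Rpower.ln (INR (maxcoef G)).

(* The proof controls the l1-norm |G|_1 = sum of the absolute values of the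
   coefficients of G, which dominates the largest coefficient and is
   subadditive and submultiplicative; moreover the exact division by 2Y used
   in the even recursion does not increase it.  Feeding these estimates into
   the doubling recursion
     psi_(2k+1) = psi_(k+2) psi_k^3 - psi_(k-1) psi_(k+1)^3,
     psi_(2k)   = psi_k (psi_(k+2) psi_(k-1)^2 - psi_(k-2) psi_(k+1)^2) / 2Y
   gives by strong induction |psi_n|_1 <= 3^((n-1)^2): the exponents produced
   by the right-hand sides are strictly below (n-1)^2, and 3^u + 3^v <= 3^w
   whenever u, v < w.  Taking logarithms, h(psi_n) <= ln 3 * (n-1)^2, and
   (n-1)^2 <= n^2 <= n^(2+eps) for n >= 1. *)
From Stdlib Require Import Reals Lra.

(* The polynomial part is written with MathComp; it lives in a module so that
   its notations do not change the reading of the final (Stdlib) statement. *)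
Module DivisionPolynomialHeight.
From HB Require Import structures.
From mathcomp Require Import all_boot all_algebra mpoly zify.
Set Implicit Arguments. Unset Strict Implicit. Unset Printing Implicit Defensive.
Import GRing.Theory.
Local Open Scope ring_scope.

Lemma leq_expn2r (m n e : nat) : (m <= n)%N -> (m ^ e <= n ^ e)%N.
Proof. by case: e => // e; rewrite leq_exp2r. Qed.

Lemma expn_add_le (b u v w : nat) : (2 <= b)%N -> (u < w)%N -> (v < w)%N ->
  (b ^ u + b ^ v <= b ^ w)%N.
Proof.
case: w => // w ge2_b lt_uw lt_vw; rewrite expnS.
have le_u : (b ^ u <= b ^ w)%N by apply: leq_pexp2l => //; lia.
have le_v : (b ^ v <= b ^ w)%N by apply: leq_pexp2l => //; lia.
nia.
Qed.

Section L1Norm.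
Variable k : nat.
Implicit Types (p q : {mpoly int[k]}).

Definition l1norm p : nat := (\sum_(m <- msupp p) `|p@_m|)%N.

(* The norm may be computed over any duplicate-free list of monomials
   containing the support; this lets us compare norms of several polynomials. *)
Lemma l1norm_over p (s : seq 'X_{1..k}) : uniq s -> {subset msupp p <= s} ->
  l1norm p = (\sum_(m <- s) `|p@_m|)%N.
Proof.
move=> s_uniq supp_s; rewrite (bigID (fun m => m \in msupp p)) /=.
rewrite [X in (_ + X)%N]big1 ?addn0; last by move=> m /memN_msupp_eq0 ->.
rewrite -big_filter /l1norm; apply: perm_big.
apply: uniq_perm; [exact: msupp_uniq | exact: filter_uniq |].
by move=> m; rewrite mem_filter andb_idr //; apply: supp_s.
Qed.

Lemma l1norm0 : l1norm 0 = 0%N.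
Proof. by rewrite /l1norm msupp0 big_nil. Qed.

Lemma l1norm1 : l1norm 1 = 1%N.
Proof. by rewrite /l1norm msupp1 big_seq1 mcoeff1 eqxx. Qed.

Lemma l1normN p : l1norm (- p) = l1norm p.
Proof.
rewrite /l1norm (perm_big _ (msuppN p)) /=.
by apply: eq_bigr => m _; rewrite mcoeffN abszN.
Qed.

Lemma l1normD p q : (l1norm (p + q) <= l1norm p + l1norm q)%N.
Proof.
set s := undup (msupp p ++ msupp q).
have s_uniq : uniq s by apply: undup_uniq.
have supp_p : {subset msupp p <= s} by move=> m h; rewrite mem_undup mem_cat h.
have supp_q : {subset msupp q <= s}.
  by move=> m h; rewrite mem_undup mem_cat h orbT.
have supp_pq : {subset msupp (p + q) <= s}.
  by move=> m /msuppD_le h; rewrite mem_undup.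
rewrite (l1norm_over s_uniq supp_p) (l1norm_over s_uniq supp_q).
rewrite (l1norm_over s_uniq supp_pq) -big_split /=.
by apply: leq_sum => m _; rewrite mcoeffD; lia.
Qed.

Lemma l1normB p q : (l1norm (p - q) <= l1norm p + l1norm q)%N.
Proof. by rewrite -(l1normN q) l1normD. Qed.

Lemma l1norm_sum (I : Type) (r : seq I) (P : pred I) (F : I -> {mpoly int[k]}) :
  (l1norm (\sum_(i <- r | P i) F i) <= \sum_(i <- r | P i) l1norm (F i))%N.
Proof.
elim: r => [|x r IH]; first by rewrite !big_nil l1norm0.
rewrite !big_cons; case: (P x) => //.
by apply: leq_trans (l1normD _ _) _; rewrite leq_add2l.
Qed.

Lemma l1norm_term (c : int) (m : 'X_{1..k}) : (l1norm (c *: 'X_[m]) <= `|c|)%N.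
Proof.
have supp_m : {subset msupp (c *: ('X_[m] : {mpoly int[k]})) <= [:: m]}.
  by move=> m' /msuppZ_le; rewrite msuppX.
by rewrite (l1norm_over _ supp_m) // big_seq1 mcoeffZ mcoeffX eqxx mulr1.
Qed.

Lemma l1normM p q : (l1norm (p * q) <= l1norm p * l1norm q)%N.
Proof.
rewrite {1}(mpolyE p) {1}(mpolyE q) big_distrlr /=.
apply: leq_trans (l1norm_sum _ _ _) _.
rewrite /l1norm big_distrl /=; apply: leq_sum => m _.
apply: leq_trans (l1norm_sum _ _ _) _.
rewrite big_distrr /=; apply: leq_sum => m' _.
rewrite -scalerAl -scalerAr scalerA -mpolyXD.
by apply: leq_trans (l1norm_term _ _) _; rewrite abszM.
Qed.

Lemma l1normX p e : (l1norm (p ^+ e) <= l1norm p ^ e)%N.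
Proof.
elim: e => [|e IH]; first by rewrite expr0 l1norm1.
rewrite exprS expnS; apply: leq_trans (l1normM _ _) _.
by rewrite leq_mul2l IH orbT.
Qed.

Lemma l1norm_nat (n : nat) : (l1norm n%:R <= n)%N.
Proof.
elim: n => [|n IH]; first by rewrite l1norm0.
by rewrite mulrSr; apply: leq_trans (l1normD _ _) _; rewrite l1norm1 addn1.
Qed.

Lemma l1norm_var (i : 'I_k) : (l1norm 'X_i <= 1)%N.
Proof. by rewrite /l1norm msuppX big_seq1 mcoeffX eqxx. Qed.

Lemma l1norm_mulX p q (c a b e : nat) :
  (l1norm p <= c ^ a)%N -> (l1norm q <= c ^ b)%N ->
  (l1norm (p * q ^+ e) <= c ^ (a + b * e))%N.
Proof.
move=> le_p le_q; apply: leq_trans (l1normM _ _) _.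
rewrite expnD expnM; apply: leq_mul => //.
by apply: leq_trans (l1normX _ _) _; apply: leq_expn2r.
Qed.

End L1Norm.

(* Bounds the l1-norm of a concrete polynomial expression in the variables of Z[lambda,X,Y]
   by the same expression with every variable replaced by 1 and every minus
   sign by a plus sign; the remaining goal is numeric. *)
Ltac bound_l1norm := lazymatch goal with
  | |- is_true (leq (l1norm (@GRing.add _ ?a (@GRing.opp _ ?b))) _) =>
      eapply leq_trans; [apply: (l1normB a b) | eapply leq_add; bound_l1norm]
  | |- is_true (leq (l1norm (@GRing.add _ ?a ?b)) _) =>
      eapply leq_trans; [apply: (l1normD a b) | eapply leq_add; bound_l1norm]
  | |- is_true (leq (l1norm (@GRing.mul _ ?a ?b)) _) =>
      eapply leq_trans; [apply: (l1normM a b) | eapply leq_mul; bound_l1norm]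
  | |- is_true (leq (l1norm (@GRing.exp _ ?a ?e)) _) =>
      eapply leq_trans; [apply: (l1normX a e) | eapply leq_expn2r; bound_l1norm]
  | |- is_true (leq (l1norm (@GRing.natmul _ (@GRing.one _) ?n)) _) =>
      exact: l1norm_nat
  | |- is_true (leq (l1norm (@GRing.one _)) _) => rewrite l1norm1; exact: leqnn
  | |- is_true (leq (l1norm vL) _) => exact: l1norm_var
  | |- is_true (leq (l1norm vX) _) => exact: l1norm_var
  | |- is_true (leq (l1norm vY) _) => exact: l1norm_var
  end.

(* Division by 2Y only keeps some coefficients, halved (rounded down). *)
Lemma l1norm_div2Y (p : ZLXY) : (l1norm (div2Y p) <= l1norm p)%N.
Proof.
rewrite /div2Y; apply: leq_trans (l1norm_sum _ _ _) _.
rewrite /l1norm [X in (_ <= X)%N](bigID (fun m : 'X_{1..3} => (1 <= m iY)%N)) /=.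
apply: leq_trans (leq_addr _ _); apply: leq_sum => m _.
by apply: leq_trans (l1norm_term _ _) _; lia.
Qed.

Lemma maxcoef_le_l1norm (G : ZLXY) : (maxcoef G <= l1norm G)%N.
Proof.
rewrite /maxcoef /l1norm; elim: (msupp G) => [|m s IH]; first by rewrite !big_nil.
rewrite !big_cons geq_max leq_addr /=.
by apply: leq_trans IH _; rewrite leq_addl.
Qed.

Lemma size_psi_list n : size (psi_list n) = n.
Proof. by elim: n => //= n IH; rewrite size_rcons IH. Qed.

Lemma nth_psi_list n i : (i < n)%N -> nth 0 (psi_list n) i = psi i.
Proof.
elim: n => // n IH; rewrite ltnS leq_eqVlt => /orP[/eqP -> | lt_in] //.
by rewrite /= nth_rcons size_psi_list lt_in IH.
Qed.

Lemma psiE n : psi n = psi_next (psi_list n).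
Proof. by rewrite /psi /= nth_rcons size_psi_list ltnn eqxx. Qed.

Lemma psi_odd k : (2 <= k)%N ->
  psi k.*2.+1 = psi k.+2 * psi k ^+ 3 - psi k.-1 * psi k.+1 ^+ 3.
Proof.
case: k => [|[|j]] // _; rewrite psiE /psi_next; set s := psi_list _.
have -> : size s = (j.*2).+4.+1 by rewrite size_psi_list; lia.
rewrite [odd _]/= odd_double /= uphalf_double.
by rewrite /s !nth_psi_list //; lia.
Qed.

Lemma psi_even k : (3 <= k)%N ->
  psi k.*2 = div2Y (psi k * (psi k.+2 * psi k.-1 ^+ 2 - psi k.-2 * psi k.+1 ^+ 2)).
Proof.
case: k => [|[|[|j]]] // _; rewrite psiE /psi_next; set s := psi_list _.
have -> : size s = (j.*2).+4.+2 by rewrite size_psi_list; lia.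
rewrite [odd _]/= odd_double /= ?uphalf_double ?doubleK.
by rewrite /s !nth_psi_list //; lia.
Qed.

Definition psi_bounded_below (n : nat) : Prop :=
  forall j, (j < n)%N -> (l1norm (psi j) <= 3 ^ (j.-1 ^ 2))%N.

(* Odd step n = 2k+1: both products have exponent
   (k+1)^2 + 3(k-1)^2 = (k-2)^2 + 3k^2 < (2k)^2 as k >= 2. *)
Lemma l1norm_psi_odd k : (2 <= k)%N -> psi_bounded_below k.*2.+1 ->
  (l1norm (psi k.*2.+1) <= 3 ^ (k.*2 ^ 2))%N.
Proof.
move=> ge2_k IH; rewrite psi_odd //; apply: leq_trans (l1normB _ _) _.
apply: leq_trans (leq_add (l1norm_mulX 3 (IH k.+2 _) (IH k _))
                          (l1norm_mulX 3 (IH k.-1 _) (IH k.+1 _)))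
                   (expn_add_le _ _ _).
all: first [lia | nia].
Qed.

(* Even step n = 2k: split off the factor psi_k, of exponent (k-1)^2; the
   bracket has exponent 3k^2 - 6k + 9 < (2k-1)^2 - (k-1)^2 as k >= 3. *)
Lemma l1norm_psi_even k : (3 <= k)%N -> psi_bounded_below k.*2 ->
  (l1norm (psi k.*2) <= 3 ^ (k.*2.-1 ^ 2))%N.
Proof.
move=> ge3_k IH; rewrite psi_even //; apply: leq_trans (l1norm_div2Y _) _.
apply: leq_trans (l1normM _ _) _.
have -> : (k.*2.-1 ^ 2 = k.-1 ^ 2 + (k.*2.-1 ^ 2 - k.-1 ^ 2))%N by nia.
rewrite expnD; apply: leq_mul; first by apply: IH; lia.
apply: leq_trans (l1normB _ _) _.
apply: leq_trans (leq_add (l1norm_mulX 2 (IH k.+2 _) (IH k.-1 _))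
                          (l1norm_mulX 2 (IH k.-2 _) (IH k.+1 _)))
                   (expn_add_le _ _ _).
all: first [lia | nia].
Qed.

Lemma l1norm_psi n : (l1norm (psi n) <= 3 ^ (n.-1 ^ 2))%N.
Proof.
elim/ltn_ind: n => -[|[|[|[|[|n]]]]] IH.
- by rewrite psiE l1norm0.
- by rewrite psiE l1norm1.
- rewrite psiE /psi_next size_psi_list /=.
  by eapply leq_trans; [bound_l1norm | ].
- rewrite psiE /psi_next size_psi_list /= /psi3.
  by eapply leq_trans; [bound_l1norm | ].
- rewrite psiE /psi_next size_psi_list /= /psi4.
  by eapply leq_trans; [bound_l1norm | ].
have [[k [def_n ge2_k]] | [k [def_n ge3_k]]] :
    (exists k, n.+4.+1 = k.*2.+1 /\ (2 <= k)%N) \/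
    (exists k, n.+4.+1 = k.*2 /\ (3 <= k)%N).
  have := odd_double_half n.+4.+1.
  by case: (odd n.+4.+1) => /= def_n; [left | right]; exists (n.+4.+1)./2; lia.
- by rewrite def_n in IH *; apply: l1norm_psi_odd.
- by rewrite def_n in IH *; apply: l1norm_psi_even.
Qed.

Lemma maxcoef_psi n : (maxcoef (psi n) <= 3 ^ (n.-1 ^ 2))%N.
Proof. exact: leq_trans (maxcoef_le_l1norm _) (l1norm_psi n). Qed.

Local Open Scope R_scope.

Lemma INR_exp3 e : INR (3 ^ e)%N = 3 ^ e.
Proof. elim: e => [|e IH] //=; rewrite expnS -multE mult_INR IH /=; ring. Qed.

(* A coefficient bound 3^e gives the height bound e * ln 3 (the height of
   the zero polynomial is ln 0 = 0). *)
Lemma height_le (G : ZLXY) e : (maxcoef G <= 3 ^ e)%N -> height G <= INR e * ln 3.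
Proof.
rewrite /height; move: (maxcoef G) => M le_M.
have ln3_gt0 : 0 < ln 3 by rewrite -ln_1; apply: ln_increasing; lra.
have e_ge0 : 0 <= INR e by apply: pos_INR.
case: (posnP M) => [-> | M_gt0].
  have ln0 : ln 0 = 0 by rewrite /ln; case: Rlt_dec => // lt00; case: (Rlt_irrefl _ lt00).
  by rewrite /= ln0; nra.
have M_pos : 0 < INR M by apply: lt_0_INR; apply/ltP.
have le_M3 : INR M <= 3 ^ e by rewrite -INR_exp3; apply: le_INR; apply/leP.
rewrite -ln_pow; last lra.
case: (Rle_lt_or_eq_dec _ _ le_M3) => [lt_M3 | ->]; last exact: Rle_refl.
by left; apply: ln_increasing.
Qed.

Lemma sqr_pred_le_Rpower n eps : (1 <= n)%N -> 0 < eps ->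
  INR (n.-1 ^ 2) <= Rpower (INR n) (2 + eps).
Proof.
move=> n_ge1 eps_gt0.
have n_ge1R : 1 <= INR n by apply: (le_INR 1); apply/leP.
have ln_n_ge0 : 0 <= ln (INR n).
  case: (Rle_lt_or_eq_dec _ _ n_ge1R) => [lt_1n | <-]; last by rewrite ln_1; lra.
  by rewrite -ln_1; left; apply: ln_increasing; lra.
have pow_eps_ge1 : 1 <= Rpower (INR n) eps.
  rewrite /Rpower; apply: Rle_trans (exp_ineq1_le _).
  by have := Rmult_le_pos _ _ (Rlt_le _ _ eps_gt0) ln_n_ge0; lra.
have pow2 : Rpower (INR n) 2 = INR n ^ 2.
  by rewrite -Rpower_pow; [congr Rpower; simpl; ring | lra].
have le_sq : INR (n.-1 ^ 2) <= INR n ^ 2.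
  rewrite [INR n ^ 2](_ : _ = INR (n ^ 2)%N); last first.
    by rewrite expnS expn1 -multE mult_INR /=; ring.
  by apply: le_INR; apply/leP; rewrite leq_exp2r // leq_pred.
have sq_le : INR n ^ 2 <= INR n ^ 2 * Rpower (INR n) eps.
  rewrite -{1}(Rmult_1_r (INR n ^ 2)); apply: Rmult_le_compat_l => //.
  by apply: pow_le; lra.
by rewrite Rpower_plus pow2; lra.
Qed.

Theorem height_psi_bound (eps : R) : 0 < eps -> forall n : nat, (1 <= n)%N ->
  height (psi n) <= ln 3 * Rpower (INR n) (2 + eps).
Proof.
move=> eps_gt0 n n_ge1.
have ln3_gt0 : 0 < ln 3 by rewrite -ln_1; apply: ln_increasing; lra.
apply: Rle_trans (height_le (maxcoef_psi n)) _.
by rewrite Rmult_comm; apply: Rmult_le_compat_l; [lra | exact: sqr_pred_le_Rpower].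
Qed.

End DivisionPolynomialHeight.

Open Scope R_scope.

Theorem lemmaA3 : forall eps : R, 0 < eps ->
  exists c : R, forall n : nat, (1 <= n)%nat ->
    height (psi n) <= c * Rpower (INR n) (2 + eps).
Proof.
intros eps eps_gt0. exists (ln 3). intros n n_ge1.
apply DivisionPolynomialHeight.height_psi_bound; [exact eps_gt0 |].
exact (ssrbool.introT ssrnat.leP n_ge1).
Qed.
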